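(* Let $X\in\mathbb{R}^{n\times D}$, labels $y\in\{1,\dots,K\}^n$, sample weights $v\in\mathbb{R}^n$, and consider weighted multiclass logistic regression in variables $W\in\mathbb{R}^{D\times K}$, $b\in\mathbb{R}^K$: $$\min F(W,b)=-\sum_{i=1}^n v_i\log\hat y_{i,y_i},\qquad \hat y_{ic}=\frac{\exp\big(b_c+\sum_{k}X_{ik}W_{kc}\big)}{\sum_{l=1}^K\exp\big(b_l+\sum_kX_{ik}W_{kl}\big)}.$$ Let $\mathcal{Q}$ be a partition of $\{1,\dots,D\}$ and let $\mathcal{P}$ be the partition of $\{1,\dots,n\}$ in which $i_1,i_2$ share a color iff $\sum_{j\in T}X_{i_1j}=\sum_{j\in T}X_{i_2j}$ for all $T\in\mathcal{Q}$. Assume (1) $(\mathcal{P},\mathcal{Q})$ is equitable on $X$; (2) for every $c\in\{1,\dots,K\}$, $\sum_{i=1}^n v_iX_{ij_1}\mathbf{1}\{y_i=c\}=\sum_{i=1}^n v_iX_{ij_2}\mathbf{1}\{y_i=c\}$ whenever $j_1,j_2$ share a color of $\mathcal{Q}$; (3) $v_i$ is constant on each color of $\mathcal{P}$. Then for every $b$ and every $\hat W$ whose rows satisfy $\hat W_{j_1,\cdot}=\hat W_{j_2,\cdot}$ whenever $j_1,j_2$ share a color of $\mathcal{Q}$, we have $\frac{\partial F}{\partial W_{j_1c}}(\hat W,b)=\frac{\partial F}{\partial W_{j_2c}}(\hat W,b)$ for every class $c$ and all $j_1,j_2$ in the same color of $\mathcal{Q}$. Hence the partition of the variables $W_{jc}$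 into colors $T\times\{c\}$ ($T\in\mathcal{Q}$, $c\le K$), together with singletons for each $b_c$, is a reduction coloring.
   Context: A partition of a finite set is a set of nonempty pairwise disjoint subsets (''colors'') covering it. A pair $(\mathcal{P},\mathcal{Q})$ of partitions of the row and column indices of $A$ is equitable on $A$ if for every $S\in\mathcal{P}$, $T\in\mathcal{Q}$: $\sum_{j\in T}A_{ij}$ is the same for all $i\in S$ and $\sum_{i\in S}A_{ij}$ is the same for all $j\in T$. A reduction coloring of an unconstrained differentiable convex program $\min F(x)$ is a partition of the variables such that at every point constant on each color, the partial derivatives of $F$ with respect to variables in a common color coincide. *)

From mathcomp Require Import all_boot all_order all_algebra.
From mathcomp Require Import all_classical all_reals all_analysis.
Set Implicit Arguments. Unset Strict Implicit. Unset Printing Implicit Defensive.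
Import Order.TTheory GRing.Theory Num.Theory.
Local Open Scope ring_scope.

Section Defs.
Variable R : realType.

Definition equitable (m n : nat) (A : 'M[R]_(m, n))
    (P : {set {set 'I_m}}) (Q : {set {set 'I_n}}) : Prop :=
  forall S T, S \in P -> T \in Q ->
    (forall i1 i2, i1 \in S -> i2 \in S ->
        \sum_(j in T) A i1 j = \sum_(j in T) A i2 j) /\
    (forall j1 j2, j1 \in T -> j2 \in T ->
        \sum_(i in S) A i j1 = \sum_(i in S) A i j2).

Definition row_rel (n D : nat) (X : 'M[R]_(n, D)) (Q : {set {set 'I_D}}) :
    rel 'I_n :=
  fun i1 i2 => [forall T in Q, \sum_(j in T) X i1 j == \sum_(j in T) X i2 j].

Definition induced_row_partition (n D : nat) (X : 'M[R]_(n, D))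
    (Q : {set {set 'I_D}}) : {set {set 'I_n}} :=
  equivalence_partition (row_rel X Q) [set: 'I_n].

Definition yhat (n D K : nat) (X : 'M[R]_(n, D)) (W : 'M[R]_(D, K))
    (b : 'rV[R]_K) (i : 'I_n) (c : 'I_K) : R :=
  expR (b 0 c + \sum_k X i k * W k c) /
  \sum_(l < K) expR (b 0 l + \sum_k X i k * W k l).

Definition logreg_loss (n D K : nat) (X : 'M[R]_(n, D)) (y : 'I_n -> 'I_K)
    (v : 'I_n -> R) (W : 'M[R]_(D, K)) (b : 'rV[R]_K) : R :=
  - \sum_(i < n) v i * ln (yhat X W b i (y i)).

Definition partialW (D K : nat) (F : 'M[R]_(D, K) -> 'rV[R]_K -> R)
    (W : 'M[R]_(D, K)) (b : 'rV[R]_K) (j : 'I_D) (c : 'I_K) : R :=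
  derive1 (fun t : R => F (W + t *: delta_mx j c) b) 0.

End Defs.

(* The gradient of the weighted logistic loss in W_{jc} is
     sum_i v_i (yhat_{ic} - 1{y_i = c}) X_{ij},
   predicted minus observed class mass, weighted by column j of X.  The observed
   part is equal across a color of Q by assumption (2).  For the predicted part,
   a W constant on the colors of Q makes the logits of two rows depend only on
   their Q-block sums, so the logits, hence yhat_{.c} and (by (3)) v_i yhat_{ic},
   are constant on the colors of P; summing column j block by block over P,
   equitability makes each block sum of X_{.j} independent of j within a color
   of Q. *)
From mathcomp Require Import all_boot all_order all_algebra.
From mathcomp Require Import all_classical all_reals all_analysis.
Set Implicit Arguments. Unset Strict Implicit. Unset Printing Implicit Defensive.
Import Order.TTheory GRing.Theory Num.Theory.
Local Open Scope ring_scope.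

Lemma sum_partition_mul_eq (R : pzSemiRingType) (I : finType)
    (P : {set {set I}}) (g f1 f2 : I -> R) :
  finset.partition P [set: I] ->
  (forall S i1 i2, S \in P -> i1 \in S -> i2 \in S -> g i1 = g i2) ->
  (forall S, S \in P -> \sum_(i in S) f1 i = \sum_(i in S) f2 i) ->
  \sum_i g i * f1 i = \sum_i g i * f2 i.
Proof.
move=> /and3P[/eqP coverP trivP _] g_const f_sums.
have sum_cover f : \sum_i f i = \sum_(S in P) \sum_(i in S) f i :> R.
  by rewrite -finset.big_trivIset // coverP; apply: eq_bigl => i; rewrite inE.
rewrite !sum_cover; apply: eq_bigr => S SP.
have [->|[i0 i0S]] := set_0Vmem S; first by rewrite !big_set0.
under eq_bigr => i iS do rewrite (g_const S i i0) //.
under [RHS]eq_bigr => i iS do rewrite (g_const S i i0) //.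
by rewrite -!mulr_sumr f_sums.
Qed.

Section InducedRowPartition.
Variables (R : realType) (n D : nat) (X : 'M[R]_(n, D)) (Q : {set {set 'I_D}}).

Let row_rel_equiv : {in [set: 'I_n] & &, equivalence_rel (row_rel X Q)}.
Proof.
move=> i1 i2 i3 _ _ _; split; first by apply/forallP => T; apply/implyP.
move=> /forallP r12; apply/idP/idP => /forallP r; apply/forallP => T;
  apply/implyP => TQ; move: (r T) (r12 T); rewrite TQ /= => /eqP <- /eqP -> //.
Qed.

Lemma induced_row_partitionP :
  finset.partition (induced_row_partition X Q) [set: 'I_n].
Proof. exact: equivalence_partitionP. Qed.

Lemma induced_row_block_sum S i1 i2 T :
  S \in induced_row_partition X Q -> i1 \in S -> i2 \in S -> T \in Q ->
  \sum_(j in T) X i1 j = \sum_(j in T) X i2 j.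
Proof.
move=> SP i1S i2S TQ.
have /and3P[_ trivP _] := induced_row_partitionP.
have : row_rel X Q i1 i2.
  rewrite -(pblock_equivalence_partition row_rel_equiv) ?inE //.
  by rewrite (def_pblock trivP SP i1S).
by move=> /forallP/(_ T); rewrite TQ => /eqP.
Qed.

End InducedRowPartition.

Section Softmax.
Variable R : realType.

Definition softmax (K : nat) (a : 'I_K -> R) (c : 'I_K) : R :=
  expR (a c) / \sum_(l < K) expR (a l).

Definition logit (n D K : nat) (X : 'M[R]_(n, D)) (W : 'M[R]_(D, K))
    (b : 'rV[R]_K) (i : 'I_n) (l : 'I_K) : R :=
  b 0 l + \sum_k X i k * W k l.

Lemma yhatE n D K (X : 'M[R]_(n, D)) W b i (c : 'I_K) :
  yhat X W b i c = softmax (logit X W b i) c.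
Proof. by []. Qed.

Lemma logreg_lossE n D K (X : 'M[R]_(n, D)) (y : 'I_n -> 'I_K) v W b :
  logreg_loss X y v W b = - \sum_i v i * ln (softmax (logit X W b i) (y i)).
Proof. by []. Qed.

Lemma logit_shift n D K (X : 'M[R]_(n, D)) W b i (j : 'I_D) (c : 'I_K) t :
  logit X (W + t *: delta_mx j c) b i =
  (fun l => logit X W b i l + t * (X i j * (l == c)%:R)).
Proof.
apply/funext => l; rewrite /logit -addrA; congr (_ + _).
under eq_bigr => k _ do rewrite !mxE mulrDr.
rewrite big_split /=; congr (_ + _).
rewrite (bigD1 j) //= eqxx big1 => [|k /negPf->]; last by rewrite /= !mulr0.
by rewrite /= addr0 mulrCA.
Qed.

Lemma sum_expR_gt0 K (l0 : 'I_K) (a : 'I_K -> R) : 0 < \sum_l expR (a l).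
Proof.
rewrite (bigD1 l0) //= ltr_wpDr ?expR_gt0 //.
by apply: sumr_ge0 => l _; exact: expR_ge0.
Qed.

Lemma ln_softmax K (a : 'I_K -> R) (k : 'I_K) :
  ln (softmax a k) = a k - ln (\sum_l expR (a l)).
Proof.
by rewrite ln_div ?expRK // posrE ?expR_gt0 ?(sum_expR_gt0 k).
Qed.

Lemma is_derive_affine (a u x : R) : is_derive x 1 (fun t => a + t * u) u.
Proof.
have -> : (fun t => a + t * u) = cst a + u \*: id.
  by apply/funext => t /=; rewrite mulrC.
have := is_deriveD (is_derive_cst a x 1) (is_deriveZ u (is_derive_id x 1)).
by rewrite add0r /GRing.scale /= mulr1.
Qed.

Lemma is_derive_ln_sum_expR K (l0 : 'I_K) (a u : 'I_K -> R) (x : R) :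
  is_derive x 1 (fun t => ln (\sum_l expR (a l + t * u l)))
    (\sum_l softmax (fun l => a l + x * u l) l * u l).
Proof.
have sum_gt0 := sum_expR_gt0 l0 (fun l => a l + x * u l).
have -> : (fun t => ln (\sum_l expR (a l + t * u l))) =
          @ln R \o \sum_l (fun t => expR (a l + t * u l)).
  by apply/funext => t /=; rewrite fct_sumE.
have -> : \sum_l softmax (fun l => a l + x * u l) l * u l =
    (\sum_l expR (a l + x * u l))^-1 * \sum_l (expR (a l + x * u l) * u l).
  rewrite mulr_sumr; apply: eq_bigr => l _.
  by rewrite /softmax /= mulrA [_^-1 * _]mulrC.
apply: is_derive1_comp; first by rewrite fct_sumE; exact: is_derive1_ln.
apply: is_derive_sum => l.
exact: (is_derive1_comp (is_derive_expR _) (is_derive_affine _ _ _)).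
Qed.

Lemma is_derive_ln_softmax K (a u : 'I_K -> R) (k : 'I_K) (x : R) :
  is_derive x 1 (fun t => ln (softmax (fun l => a l + t * u l) k))
    (u k - \sum_l softmax (fun l => a l + x * u l) l * u l).
Proof.
have -> : (fun t => ln (softmax (fun l => a l + t * u l) k)) =
    (fun t => a k + t * u k) - (fun t => ln (\sum_l expR (a l + t * u l))).
  by apply/funext => t; rewrite ln_softmax.
exact: is_deriveB (is_derive_affine _ _ _) (is_derive_ln_sum_expR k _ _ _).
Qed.

End Softmax.

Lemma partialW_logreg_loss (R : realType) n D K (X : 'M[R]_(n, D))
    (y : 'I_n -> 'I_K) v W b j c :
  partialW (logreg_loss X y v) W b j c =
  \sum_i (v i * yhat X W b i c) * X i j - \sum_i v i * X i j * (y i == c)%:R.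
Proof.
set u := fun i (l : 'I_K) => X i j * (l == c)%:R.
have sum_u a i : \sum_l a l * u i l = a c * X i j.
  rewrite (bigD1 c) //= big1 ?addr0 => [|l /negPf]; first by rewrite /u eqxx mulr1.
  by rewrite /u => ->; rewrite !mulr0.
rewrite /partialW derive1E.
have -> : (fun t => logreg_loss X y v (W + t *: delta_mx j c) b) =
    - \sum_i v i \*: (fun t => ln (softmax (fun l => logit X W b i l + t * u i l) (y i))).
  apply/funext => t; rewrite logreg_lossE /= fct_sumE; congr (- _).
  by apply: eq_bigr => i _; rewrite logit_shift.
rewrite (@derive_val _ _ _ _ _ _ _ (is_deriveN (is_derive_sum (fun i =>
  is_deriveZ (v i) (is_derive_ln_softmax (logit X W b i) (u i) (y i) 0))))).
rewrite -sumrN -sumrB; apply: eq_bigr => i _.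
have -> : (fun l => logit X W b i l + 0 * u i l) = logit X W b i.
  by apply/funext => l; rewrite mul0r addr0.
by rewrite sum_u /u yhatE /GRing.scale /= mulrBr opprB !mulrA.
Qed.

Lemma logit_eq_induced_block (R : realType) n D K (X : 'M[R]_(n, D))
    (Q : {set {set 'I_D}}) (W : 'M[R]_(D, K)) b S i1 i2 :
  finset.partition Q [set: 'I_D] ->
  (forall T j1 j2 c, T \in Q -> j1 \in T -> j2 \in T -> W j1 c = W j2 c) ->
  S \in induced_row_partition X Q -> i1 \in S -> i2 \in S ->
  logit X W b i1 = logit X W b i2.
Proof.
move=> partQ W_const SP i1S i2S; apply/funext => l; rewrite /logit; congr (_ + _).
rewrite ![\sum_k X _ k * _](eq_bigr _ (fun k _ => mulrC _ _)).
apply: (sum_partition_mul_eq partQ) => [T k1 k2 TQ|T TQ]; first exact: W_const.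
exact: (induced_row_block_sum SP i1S i2S TQ).
Qed.

Theorem theorem5 (R : realType) (n D K : nat) (X : 'M[R]_(n, D))
    (y : 'I_n -> 'I_K) (v : 'I_n -> R) (Q : {set {set 'I_D}}) :
  finset.partition Q [set: 'I_D] ->
  equitable X (induced_row_partition X Q) Q ->
  (forall (c : 'I_K) (T : {set 'I_D}) (j1 j2 : 'I_D),
      T \in Q -> j1 \in T -> j2 \in T ->
      \sum_(i < n) v i * X i j1 * (y i == c)%:R =
      \sum_(i < n) v i * X i j2 * (y i == c)%:R) ->
  (forall (S : {set 'I_n}) (i1 i2 : 'I_n),
      S \in induced_row_partition X Q -> i1 \in S -> i2 \in S -> v i1 = v i2) ->
  forall (b : 'rV[R]_K) (W : 'M[R]_(D, K)),
    (forall (T : {set 'I_D}) (j1 j2 : 'I_D) (c : 'I_K),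
        T \in Q -> j1 \in T -> j2 \in T -> W j1 c = W j2 c) ->
    forall (T : {set 'I_D}) (j1 j2 : 'I_D) (c : 'I_K),
      T \in Q -> j1 \in T -> j2 \in T ->
      partialW (logreg_loss X y v) W b j1 c = partialW (logreg_loss X y v) W b j2 c.
Proof.
move=> partQ equitXPQ label_sums v_const b W W_const T j1 j2 c TQ j1T j2T.
rewrite !partialW_logreg_loss (label_sums c T j1 j2 TQ j1T j2T); congr (_ - _).
apply: (sum_partition_mul_eq (induced_row_partitionP X Q)).
- move=> S i1 i2 SP i1S i2S; rewrite !yhatE (v_const S i1 i2) //.
  by rewrite (logit_eq_induced_block b partQ W_const SP i1S i2S).
- by move=> S SP; have [_ colsums] := equitXPQ S T SP TQ; exact: colsums.
Qed.
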